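(* Each of the following ten sets of four generalized Bell states in $\mathbb{C}^4\otimes\mathbb{C}^4$ is perfectly distinguishable by one-way LOCC using only projective measurements: $\{\ket{\psi_{00}}\}\cup T$ with $T$ one of $\{\ket{\psi_{01}},\ket{\psi_{10}},\ket{\psi_{11}}\}$, $\{\ket{\psi_{01}},\ket{\psi_{10}},\ket{\psi_{30}}\}$, $\{\ket{\psi_{01}},\ket{\psi_{10}},\ket{\psi_{32}}\}$, $\{\ket{\psi_{01}},\ket{\psi_{11}},\ket{\psi_{12}}\}$, $\{\ket{\psi_{01}},\ket{\psi_{11}},\ket{\psi_{31}}\}$, $\{\ket{\psi_{01}},\ket{\psi_{11}},\ket{\psi_{33}}\}$, $\{\ket{\psi_{01}},\ket{\psi_{12}},\ket{\psi_{30}}\}$, $\{\ket{\psi_{01}},\ket{\psi_{12}},\ket{\psi_{32}}\}$, $\{\ket{\psi_{01}},\ket{\psi_{13}},\ket{\psi_{31}}\}$, $\{\ket{\psi_{01}},\ket{\psi_{13}},\ket{\psi_{33}}\}$.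
   Context: Generalized Bell states in $\mathbb{C}^4\otimes\mathbb{C}^4$ (Alice holds the first factor, Bob the second): $\ket{\psi_{nm}}=\frac12\sum_{j=0}^{3}e^{2\pi i jn/4}\ket{j}_A\ket{j\oplus_4 m}_B$ for $n,m\in\{0,1,2,3\}$, where $j\oplus_4 m=(j+m)\bmod 4$. Perfect distinguishability by one-way LOCC using only projective measurements means: one party performs a projective measurement on her subsystem, communicates the outcome classically, and the other party then performs a projective measurement (depending on that outcome) whose result identifies with certainty which state of the set was shared. *)

From mathcomp Require Import all_boot all_order all_algebra all_field.
Set Implicit Arguments. Unset Strict Implicit. Unset Printing Implicit Defensive.
Import Order.TTheory GRing.Theory Num.Theory.
Local Open Scope ring_scope.

Definition adjmx (A : 'M[algC]_4) : 'M[algC]_4 := (map_mx (fun x => x^*) A)^T.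

Definition projector (A : 'M[algC]_4) : Prop := adjmx A = A /\ A *m A = A.

Definition proj_meas (m : nat) (P : 'I_m -> 'M[algC]_4) : Prop :=
  (forall a, projector (P a)) /\ \sum_(a < m) P a = 1%:M.

(* A vector of C^4 (x) C^4 is given by its coefficient matrix:
   |psi> = sum_{i,j} psi i j |i>_A |j>_B.
   prob psi A B = <psi| (A (x) B) |psi>, A acting on Alice, B on Bob. *)
Definition prob (psi A B : 'M[algC]_4) : algC :=
  \sum_(i < 4) \sum_(j < 4) \sum_(k < 4) \sum_(l < 4)
     (psi i j)^* * A i k * B j l * psi k l.

(* Generalized Bell state |psi_{nm}> = 1/2 sum_j i^(jn) |j>|j+m mod 4>,
   since e^{2 pi i/4} = 'i. *)
Definition bell (n m : nat) : 'M[algC]_4 :=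
  \matrix_(i < 4, j < 4)
     (if (j : nat) == ((i + m) %% 4)%N then 2^-1 * 'i ^+ (i * n) else 0).

(* One-way LOCC, projective only, first party measures (P a), communicates a,
   second party measures (Q a b); guess g a b must equal the true index k
   whenever outcome (a,b) has nonzero probability on state S k. *)
Definition alice_first_distinguishable (I : finType) (S : I -> 'M[algC]_4) : Prop :=
  exists (m n : nat) (P : 'I_m -> 'M[algC]_4) (Q : 'I_m -> 'I_n -> 'M[algC]_4)
         (g : 'I_m -> 'I_n -> I),
    [/\ proj_meas P, (forall a, proj_meas (Q a)) &
        forall k a b, prob (S k) (P a) (Q a b) != 0 -> g a b = k].

Definition bob_first_distinguishable (I : finType) (S : I -> 'M[algC]_4) : Prop :=
  exists (m n : nat) (P : 'I_m -> 'M[algC]_4) (Q : 'I_m -> 'I_n -> 'M[algC]_4)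
         (g : 'I_m -> 'I_n -> I),
    [/\ proj_meas P, (forall a, proj_meas (Q a)) &
        forall k a b, prob (S k) (Q a b) (P a) != 0 -> g a b = k].

Definition one_way_proj_distinguishable (I : finType) (S : I -> 'M[algC]_4) : Prop :=
  alice_first_distinguishable S \/ bob_first_distinguishable S.

Definition bell_set (s : seq (nat * nat)) (k : 'I_4) : 'M[algC]_4 :=
  bell (nth (0, 0) s k).1 (nth (0, 0) s k).2.

Definition theorem6_sets : seq (seq (nat * nat)) :=
  [:: [:: (0,0); (0,1); (1,0); (1,1)];
      [:: (0,0); (0,1); (1,0); (3,0)];
      [:: (0,0); (0,1); (1,0); (3,2)];
      [:: (0,0); (0,1); (1,1); (1,2)];
      [:: (0,0); (0,1); (1,1); (3,1)];
      [:: (0,0); (0,1); (1,1); (3,3)];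
      [:: (0,0); (0,1); (1,2); (3,0)];
      [:: (0,0); (0,1); (1,2); (3,2)];
      [:: (0,0); (0,1); (1,3); (3,1)];
      [:: (0,0); (0,1); (1,3); (3,3)]]%N.

From mathcomp Require Import all_boot all_order all_algebra all_field.
From mathcomp Require Import ring.
Import Order.TTheory GRing.Theory Num.Theory.
Local Open Scope ring_scope.

(* Alice and Bob each measure locally in the orthonormal basis
   (1,1,-1,-1)/2, (1,-1,-1,1)/2, (1,i,1,i)/2, (1,-i,1,-i)/2 of C^4, whose
   entries are powers of i; Bob's measurement need not even depend on
   Alice's outcome. Outcome (a,b) occurs on |psi> with probability
   |<w_a (x) w_b | psi>|^2, and for a Bell state this overlap is half a sum of
   four powers of i, hence computable exactly as a Gaussian integer. For each
   of the ten sets a finite computation shows that every outcome pair has a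
   nonzero overlap with at most one state of the set, which is then the guess. *)

Definition gauss_of_expCi (r : nat) : int * int :=
  match (r %% 4)%N with 0 => (1, 0) | 1 => (0, 1) | 2 => (-1, 0) | _ => (0, -1) end%R.

Definition gaussC (z : int * int) : algC := z.1%:~R + z.2%:~R * 'i.

Definition gauss_sum (s : seq nat) : int * int :=
  foldr (fun r z => ((gauss_of_expCi r).1 + z.1, (gauss_of_expCi r).2 + z.2))
    (0, 0) s.

Lemma expCi4 : ('i : algC) ^+ 4 = 1.
Proof. by rewrite (exprM _ 2 2) sqrCi expr2 mulrNN mulr1. Qed.

Lemma expCi_gauss r : ('i : algC) ^+ r = gaussC (gauss_of_expCi r).
Proof.
rewrite {1}(divn_eq r 4) exprD mulnC exprM expCi4 expr1n mul1r /gaussC.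
rewrite /gauss_of_expCi; have : (r %% 4 < 4)%N by rewrite ltn_mod.
case: (r %% 4)%N => [|[|[|[|k]]]] //= _.
- by rewrite mul0r addr0.
- by rewrite mul1r add0r expr1.
- by rewrite sqrCi mul0r addr0.
- by rewrite exprS sqrCi mulrN1 add0r mulN1r.
Qed.

Lemma sum_expCi_gauss (s : seq nat) :
  \sum_(r <- s) ('i : algC) ^+ r = gaussC (gauss_sum s).
Proof.
elim: s => [|r s IH]; first by rewrite big_nil /gaussC /= mul0r addr0.
by rewrite big_cons IH expCi_gauss /gaussC /= !intrD; ring.
Qed.

Lemma sum4_expCi (f : nat -> nat) :
  \sum_(k < 4) ('i : algC) ^+ f k = gaussC (gauss_sum [seq f k | k <- iota 0 4]).
Proof. by rewrite -sum_expCi_gauss big_map -(big_mkord xpredT (fun k => _ ^+ f k)). Qed.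

Lemma conjCiX e : (('i : algC) ^+ e)^* = 'i ^+ (3 * e).
Proof.
rewrite rmorphXn /= conjCi exprM; congr (_ ^+ _).
by rewrite exprS sqrCi mulrN1.
Qed.

Lemma expCi_mul_conj e : ('i : algC) ^+ e * ('i ^+ e)^* = 1.
Proof. by rewrite conjCiX -exprD -[(e + _)%N]/(4 * e)%N exprM expCi4 expr1n. Qed.

Section PhaseMeasurement.

Variable phase_exp : nat -> nat -> nat.

Let w (a k : nat) : algC := 'i ^+ phase_exp a k.

Definition phase_proj (a : 'I_4) : 'M[algC]_4 :=
  \matrix_(i, j) (4%:R^-1 * (w a i * (w a j)^*)).

Lemma phase_proj_projector a : projector (phase_proj a).
Proof.
have conj4 : ((4%:R : algC)^-1)^* = 4%:R^-1.
  by apply: geC0_conj; rewrite invr_ge0 ler0n.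
split; apply/matrixP => i j; rewrite !mxE.
  by rewrite !rmorphM /= conjCK conj4; ring.
rewrite (eq_bigr (fun _ => 4%:R^-1 * 4%:R^-1 * (w a i * (w a j)^*))) => [|k _].
  by rewrite sumr_const card_ord -mulr_natr; field.
rewrite !mxE; transitivity
  (4%:R^-1 * 4%:R^-1 * (w a i * (w a j)^*) * (w a k * (w a k)^*)); first by ring.
by rewrite expCi_mul_conj mulr1.
Qed.

Hypothesis phase_exp_complete :
  forall i j : 'I_4, \sum_(a < 4) w a i * (w a j)^* = (i == j)%:R * 4%:R.

Lemma phase_proj_meas : proj_meas phase_proj.
Proof.
split; first exact: phase_proj_projector.
apply/matrixP => i j; rewrite summxE !mxE.
under eq_bigr do rewrite !mxE.
rewrite -mulr_sumr phase_exp_complete.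
by case: (i == j); rewrite ?mul0r ?mulr0 // mul1r mulVf ?pnatr_eq0.
Qed.

Definition phase_overlap (psi : 'M[algC]_4) (a b : 'I_4) : algC :=
  \sum_(k < 4) \sum_(l < 4) (w a k)^* * (w b l)^* * psi k l.

Lemma prob_phase_proj psi a b :
  prob psi (phase_proj a) (phase_proj b) = `|phase_overlap psi a b| ^+ 2 / 16%:R.
Proof.
have conj_overlap : (phase_overlap psi a b)^* =
    \sum_(i < 4) \sum_(j < 4) (psi i j)^* * w a i * w b j.
  rewrite rmorph_sum; apply: eq_bigr => i _; rewrite rmorph_sum.
  by apply: eq_bigr => j _; rewrite !rmorphM /= !conjCK mulrC mulrA.
rewrite /prob normCK [_ * _^*]mulrC -mulrA conj_overlap mulr_suml.
apply: eq_bigr => i _; rewrite mulr_suml; apply: eq_bigr => j _.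
rewrite /phase_overlap !mulr_suml mulr_sumr; apply: eq_bigr => k _.
rewrite mulr_suml mulr_sumr; apply: eq_bigr => l _.
rewrite !mxE (natrM _ 4 4) invfM; ring.
Qed.

Definition bell_overlap_exp (n m a b k : nat) : nat :=
  3 * phase_exp a k + 3 * phase_exp b ((k + m) %% 4) + k * n.

Lemma phase_overlap_bell n m a b :
  phase_overlap (bell n m) a b = 2^-1 * \sum_(k < 4) 'i ^+ bell_overlap_exp n m a b k.
Proof.
rewrite /phase_overlap mulr_sumr; apply: eq_bigr => k _.
rewrite (bigD1 (Ordinal (ltn_pmod (k + m) (isT : (0 < 4)%N)))) //= big1 ?addr0.
  by rewrite !mxE /= eqxx !conjCiX !exprD; ring.
move=> l; rewrite !mxE -(inj_eq val_inj) /=.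
by move/negbTE ->; rewrite mulr0.
Qed.

End PhaseMeasurement.

Definition basis_exp (a k : nat) : nat :=
  nth 0 (nth [::] [:: [:: 0; 0; 2; 2]; [:: 0; 2; 2; 0];
                      [:: 0; 1; 0; 1]; [:: 0; 3; 0; 3]] a) k.

Lemma basis_exp_complete (i j : 'I_4) :
  \sum_(a < 4) ('i : algC) ^+ basis_exp a i * ('i ^+ basis_exp a j)^* = (i == j)%:R * 4%:R.
Proof.
under eq_bigr do rewrite conjCiX -exprD.
rewrite (sum4_expCi (fun a => basis_exp a i + 3 * basis_exp a j)) /gaussC.
by case: i => [[|[|[|[|?]]]] ?] //; case: j => [[|[|[|[|?]]]] ?] //=;
  rewrite ?mul0r ?addr0 ?mul1r.
Qed.

Definition bell_overlap_gauss (nm : nat * nat) (a b : nat) : int * int :=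
  gauss_sum [seq bell_overlap_exp basis_exp nm.1 nm.2 a b k | k <- iota 0 4].

Definition overlap_vanishes (s : seq (nat * nat)) (a b k : nat) : bool :=
  bell_overlap_gauss (nth (0, 0) s k) a b == (0, 0).

(* [find] returns 4 when every overlap vanishes; such outcomes never occur. *)
Definition phase_guess (s : seq (nat * nat)) (a b : nat) : nat :=
  find (fun k => ~~ overlap_vanishes s a b k) (iota 0 4).

Definition outcomes_unambiguous (s : seq (nat * nat)) : bool :=
  all (fun a => all (fun b => all (fun k =>
    overlap_vanishes s a b k || (phase_guess s a b == k)) (iota 0 4)) (iota 0 4))
    (iota 0 4).

Lemma alice_first_of_unambiguous s :
  outcomes_unambiguous s -> alice_first_distinguishable (bell_set s).
Proof.
move=> unamb; have meas := @phase_proj_meas basis_exp basis_exp_complete.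
exists 4%N, 4%N, (phase_proj basis_exp), (fun=> phase_proj basis_exp).
exists (fun a b => inord (phase_guess s a b)).
split=> // k a b; apply: contraTeq => guess_neq.
have in4 (i : 'I_4) : (i : nat) \in iota 0 4 by rewrite mem_iota /=.
move/allP/(_ _ (in4 a))/allP/(_ _ (in4 b))/allP/(_ _ (in4 k)): unamb.
have /negbTE-> : phase_guess s a b != k.
  by apply: contraNneq guess_neq => g_eq; rewrite g_eq inord_val.
rewrite orbF => /eqP; rewrite /overlap_vanishes /bell_overlap_gauss.
rewrite prob_phase_proj phase_overlap_bell sum4_expCi => ->.
by rewrite /gaussC /= mul0r addr0 mulr0 normr0 expr0n mul0r eqxx.
Qed.

Lemma theorem6_sets_unambiguous : all outcomes_unambiguous theorem6_sets.
Proof. by vm_compute. Qed.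

Theorem theorem6 :
  forall s, s \in theorem6_sets -> one_way_proj_distinguishable (bell_set s).
Proof. by move=> s /(allP theorem6_sets_unambiguous)/alice_first_of_unambiguous; left. Qed.
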